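(* Let $\mathcal X$ be a finite abelian group, $\mathcal Z$ a finite set, $P_{XZ}$ a distribution on $\mathcal X\times\mathcal Z$ and $W_{XZ|X}(x,z|x'):=P_{XZ}(x-x',z)$. For any finite set $\mathcal M$, distribution $P_M$ on $\mathcal M$, distribution $Q_Z$ on $\mathcal Z$ and constant $c>0$, \[ P_{js}(P_M,W_{XZ|X})\ge\sum_{\substack{(m,x,z):\\ P_M(m)P_{XZ}(x,z)\le \frac{c}{|\mathcal X|}Q_Z(z)}}P_M(m)P_{XZ}(x,z)\;-\;c. \]
   Context: A code $\phi=(\mathsf e,\mathsf d)$ consists of $\mathsf e:\mathcal M\to\mathcal X$ and $\mathsf d:\mathcal X\times\mathcal Z\to\mathcal M$; $P_{js}[\phi|P_M,W]:=\sum_mP_M(m)W(\{y:\mathsf d(y)\ne m\}|\mathsf e(m))$, and $P_{js}(P_M,W):=\inf_\phi P_{js}[\phi|P_M,W]$. *)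

From HB Require Import structures.
From mathcomp Require Import all_boot all_order all_algebra.
Set Implicit Arguments. Unset Strict Implicit. Unset Printing Implicit Defensive.
Import Order.TTheory GRing.Theory Num.Theory.
Local Open Scope ring_scope.

Definition is_dist (R : realFieldType) (T : finType) (P : T -> R) : Prop :=
  (forall t, 0 <= P t) /\ \sum_(t : T) P t = 1.

Definition code (M X Y : finType) : finType :=
  ({ffun M -> X} * {ffun Y -> M})%type.

(* P_js[phi | P_M, W] = sum_m P_M(m) W({y : d y <> m} | e m),
   where W x y is the transition probability W(y|x). *)
Definition Perr (R : realFieldType) (M X Y : finType)
    (phi : code M X Y) (PM : M -> R) (W : X -> Y -> R) : R :=
  \sum_(m : M) PM m * \sum_(y : Y | phi.2 y != m) W (phi.1 m) y.

(* P_js(P_M, W) = inf over all codes; the set of codes is finite, so the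
   infimum is a minimum.  The neutral element 1 is harmless: every error
   probability is <= 1 when P_M and W(.|x) are distributions. *)
Definition Pjs (R : realFieldType) (M X Y : finType)
    (PM : M -> R) (W : X -> Y -> R) : R :=
  \big[Num.min/1]_(phi : code M X Y) Perr phi PM W.

From HB Require Import structures.
From mathcomp Require Import all_boot all_order all_algebra.
Set Implicit Arguments. Unset Strict Implicit. Unset Printing Implicit Defensive.
Import Order.TTheory GRing.Theory Num.Theory.
Local Open Scope ring_scope.

(* Fix a code (e, d) and shift the noise: the error probability becomes the
   P_M P_XZ-mass of the triples (m, x, z) with d (x + e m, z) <> m.  On the
   set where P_M P_XZ <= c/|X| Q_Z, bound P_M P_XZ by itself off these
   "decoded" triples and by c/|X| Q_Z on them.  For each output exactly one
   message is decoded, so the second part sums to |X| * c/|X| = c. *)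

Lemma Pjs_ge (R : realFieldType) (M X Y : finType) (PM : M -> R)
    (W : X -> Y -> R) (b : R) :
  b <= 1 -> (forall phi, b <= Perr phi PM W) -> b <= Pjs PM W.
Proof.
move=> b_le1 b_lePerr; rewrite /Pjs.
by elim/big_ind: _ => // u v bu bv; rewrite le_min bu bv.
Qed.

Lemma sumr_le_test (R : numDomainType) (T : finType) (f g : T -> R)
    (A : pred T) :
  (forall t, 0 <= f t) -> (forall t, 0 <= g t) ->
  \sum_(t | f t <= g t) f t <= \sum_(t | ~~ A t) f t + \sum_(t | A t) g t.
Proof.
move=> f_ge0 g_ge0; rewrite (big_mkcond (fun t => f t <= g t)).
rewrite (big_mkcond (fun t => ~~ A t)) (big_mkcond A) -big_split /=.
apply: ler_sum => t _.
by case: (A t); case: ifP => // fg; rewrite ?add0r ?addr0.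
Qed.

Lemma big_pair_split (V : nmodType) (I J : finType) (F : I * J -> V) :
  \sum_(p : I * J) F p = \sum_(i : I) \sum_(j : J) F (i, j).
Proof. by rewrite pair_bigA; apply: eq_bigr => -[]. Qed.

Lemma big_triple (V : nmodType) (I J K : finType) (F : I * J * K -> V) :
  \sum_(t : I * J * K) F t = \sum_(i : I) \sum_(y : J * K) F (i, y.1, y.2).
Proof.
rewrite !big_pair_split; apply: eq_bigr => i _.
by rewrite big_pair_split.
Qed.

Lemma big_shift (V : nmodType) (M Z : finType) (X : finZmodType)
    (e : M -> X) (F : M * X * Z -> V) :
  \sum_(t : M * X * Z) F t = \sum_(t : M * X * Z) F (t.1.1, t.1.2 + e t.1.1, t.2).
Proof.
pose h (t : M * X * Z) := (t.1.1, t.1.2 + e t.1.1, t.2).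
rewrite (reindex_inj (h := h)) //.
by move=> [[m1 x1] z1] [[m2 x2] z2] [-> /addIr-> ->].
Qed.

Section AdditiveNoise.

Variables (R : realFieldType) (X : finZmodType) (Z M : finType).
Variables (PXZ : X * Z -> R) (PM : M -> R) (phi : code M X (X * Z)%type).

Definition additive_channel (x' : X) (xz : X * Z) : R := PXZ (xz.1 - x', xz.2).

Definition decoded (t : M * X * Z) : bool :=
  phi.2 (t.1.2 + phi.1 t.1.1, t.2) == t.1.1.

Lemma Perr_additive_channel :
  Perr phi PM additive_channel =
  \sum_(t | ~~ decoded t) PM t.1.1 * PXZ (t.1.2, t.2).
Proof.
rewrite big_mkcond (big_shift (fun m => - phi.1 m)) big_triple /Perr.
apply: eq_bigr => m _; rewrite big_mkcond mulr_sumr.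
apply: eq_bigr => -[x z] _; rewrite /decoded /additive_channel /= addrNK.
by case: ifP; rewrite ?mulr0.
Qed.

Lemma sum_decoded (g : Z -> R) :
  \sum_(t | decoded t) g t.2 = \sum_(y : X * Z) g y.2.
Proof.
rewrite big_mkcond (big_shift (fun m => - phi.1 m)) big_triple exchange_big.
apply: eq_bigr => y _.
rewrite (eq_bigr (fun m => if m == phi.2 y then g y.2 else 0)) => [|m _].
  by rewrite -big_mkcond big_pred1_eq.
by rewrite /decoded /= addrNK -surjective_pairing eq_sym.
Qed.

End AdditiveNoise.

Theorem mainTheorem7 (R : realFieldType) (X : finZmodType) (Z M : finType)
    (PXZ : X * Z -> R) (PM : M -> R) (QZ : Z -> R) (c : R) :
  is_dist PXZ -> is_dist PM -> is_dist QZ -> 0 < c ->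
  Pjs PM (fun (x' : X) (xz : X * Z) => PXZ (xz.1 - x', xz.2))
  >= \sum_(t : M * X * Z |
             PM t.1.1 * PXZ (t.1.2, t.2) <= c / #|X|%:R * QZ t.2)
        PM t.1.1 * PXZ (t.1.2, t.2) - c.
Proof.
move=> [PXZ_ge0 PXZ1] [PM_ge0 PM1] [QZ_ge0 QZ1] c_gt0.
pose f (t : M * X * Z) := PM t.1.1 * PXZ (t.1.2, t.2).
pose g (z : Z) := c / #|X|%:R * QZ z.
have f_ge0 t : 0 <= f t by rewrite mulr_ge0.
have X_gt0 : (0 < #|X|)%N by apply/card_gt0P; exists 0.
have g_ge0 z : 0 <= g z by rewrite mulr_ge0 // divr_ge0 // ltW.
have f_mass : \sum_t f t = 1.
  rewrite big_triple -PM1; apply: eq_bigr => m _.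
  rewrite /f /= -mulr_sumr -[RHS]mulr1 -PXZ1.
  by congr (_ * _); apply: eq_bigr => -[].
have g_mass : \sum_(y : X * Z) g y.2 = c.
  rewrite -(pair_bigA _ (fun _ z => g z)) /= sumr_const -mulr_sumr QZ1 mulr1.
  by rewrite -[_ *+ _]mulr_natr divfK // pnatr_eq0 -lt0n.
apply: Pjs_ge => [|phi].
  have S_le1 : \sum_(t | f t <= g t.2) f t <= 1.
    by rewrite -[leRHS]f_mass [leRHS](bigID (fun t => f t <= g t.2)) lerDl sumr_ge0.
  by rewrite lerBlDr (le_trans S_le1) // lerDl ltW.
rewrite Perr_additive_channel lerBlDr -[X in _ <= _ + X]g_mass -(sum_decoded phi).
by apply: sumr_le_test => // t; apply: g_ge0.
Qed.
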